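(* For every $\varepsilon\in(0,1)$ there exist $\xi>0$ and $t_0$ such that the following holds for every set $W$ with $|W|=t\ge t_0$. Suppose that for each $3$-subset $R\subseteq W$ we are given a map $\sigma_R:R\to\{0,1\}$. Call a $5$-subset $L\subseteq W$ consistent if for all $3$-subsets $R,S\subseteq L$, $\sigma_R$ and $\sigma_S$ agree on $R\cap S$. If at least $(1-\xi)\binom t5$ of the $5$-subsets of $W$ are consistent, then there is $f:W\to\{0,1\}$ such that $\sigma_R=f|_R$ for all but at most $\varepsilon\binom t3$ of the $3$-subsets $R$ of $W$. *)

From HB Require Import structures.
From mathcomp Require Import all_boot all_order all_algebra.
Set Implicit Arguments. Unset Strict Implicit. Unset Printing Implicit Defensive.
Import Order.TTheory GRing.Theory Num.Theory.

(* A system of local maps: to each 3-subset R of W a map sigma R : R -> {0,1},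
   represented as sigma R : W -> bool (only values on R matter). *)

Definition consistent (W : finType) (sigma : {set W} -> W -> bool) (L : {set W}) : bool :=
  [forall R : {set W}, forall S : {set W},
     ((R \subset L) && (S \subset L) && (#|R| == 3) && (#|S| == 3)) ==>
     [forall x in R :&: S, sigma R x == sigma S x]].

Definition agrees_with (W : finType) (sigma : {set W} -> W -> bool) (f : W -> bool)
  (R : {set W}) : bool :=
  [forall x in R, sigma R x == f x].

(* Take f to be the majority vote: f x is the value assigned to x by most
   triples through x.  If a triple R disagrees with f at x, then R together with
   any triple S through x voting with the majority lies in some 5-set L, and R, S
   conflict at x, so L is inconsistent.  The majority holds at least half of the
   C(t-1,2) triples through x, and each inconsistent L arises from at most
   5 * 10 * 10 triples (x, R, S); hence
     C(t-1,2) * #bad <= 1000 * #inconsistent <= 1000 xi C(t,5)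
                    <= 100 xi C(t-1,2) C(t,3),
   and xi = eps/100 works for every t >= 5. *)

From HB Require Import structures.
From mathcomp Require Import all_boot all_order all_algebra lra.
Import Order.TTheory GRing.Theory Num.Theory.
Set Implicit Arguments. Unset Strict Implicit. Unset Printing Implicit Defensive.

Lemma leq_card_bigcup (I T : finType) (P : pred I) (F : I -> {set T}) :
  #|\bigcup_(i | P i) F i| <= \sum_(i | P i) #|F i|.
Proof.
elim/big_rec2: _ => [|i n U _ leUn]; first by rewrite cards0.
by rewrite (leq_trans (leq_card_setU _ _)) ?leq_add2l.
Qed.

Lemma exists_superset (T : finType) (A : {set T}) k :
  #|A| <= k <= #|T| -> exists2 L : {set T}, A \subset L & #|L| = k.
Proof.
case/andP=> leAk lekT.
have : 0 < #|[set B : {set T} | B \subset ~: A & #|B| == k - #|A|]|.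
  by rewrite cards_draws bin_gt0 leq_subLR cardsC.
case/card_gt0P=> B; rewrite inE => /andP[sBA /eqP cardB].
exists (A :|: B); first exact: subsetUl.
have disjAB : [disjoint A & B] by rewrite disjoint_sym disjoints_subset.
by rewrite cardsU (disjoint_setI0 disjAB) cards0 subn0 cardB subnKC.
Qed.

Lemma card_setU_meet (T : finType) (A B : {set T}) :
  A :&: B != set0 -> #|A :|: B| < #|A| + #|B|.
Proof. by move=> meetAB; rewrite -cardsUI -[X in X < _]addn0 ltn_add2l card_gt0. Qed.

Lemma leq_mul_bin5_bin3 t : 10 * 'C(t, 5) <= 'C(t, 3) * 'C(t.-1, 2).
Proof.
rewrite -(@leq_pmul2r (3`! * 2`!)) // [leqRHS]mulnACA !bin_ffact.
have -> : 10 * 'C(t, 5) * (3`! * 2`!) = 'C(t, 5) * 5`! by rewrite mulnAC mulnC.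
rewrite bin_ffact.
case: t => [|[|[|[|t]]]] //; rewrite !ffactnS ffactn0 /= !muln1.
rewrite -!mulnA !leq_mul2l /=.
by apply: leq_mul; do 2 apply: leqW.
Qed.

Lemma mul_add_le_double (b g : nat) : b <= g -> (b + g) * b <= 2 * (b * g).
Proof.
by move=> le_bg; rewrite mulnDl [g * b]mulnC mul2n -addnn leq_add2r leq_mul2l le_bg orbT.
Qed.

Section MajorityVote.

Variables (W : finType) (sigma : {set W} -> W -> bool).

Definition triples_at (x : W) : {set {set W}} :=
  [set R : {set W} | #|R| == 3 & x \in R].

Definition votes (x : W) (b : bool) : {set {set W}} :=
  [set R in triples_at x | sigma R x == b].

Definition majority (x : W) : bool := #|votes x false| <= #|votes x true|.

Definition disagreements (f : W -> bool) : {set {set W}} :=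
  [set R : {set W} | #|R| == 3 & ~~ agrees_with sigma f R].

Definition inconsistent_quintuples : {set {set W}} :=
  [set L : {set W} | #|L| == 5 & ~~ consistent sigma L].

Definition triples_of (L : {set W}) : {set {set W}} :=
  [set R : {set W} | R \subset L & #|R| == 3].

Lemma card_triples_at x : #|triples_at x| = 'C(#|W|.-1, 2).
Proof.
have notin_pairs B : B \in [set B : {set W} | B \subset [set~ x] & #|B| == 2] -> x \notin B.
  by rewrite inE => /andP[/subsetP sBx _]; apply/negP => /sBx; rewrite !inE eqxx.
have -> : triples_at x = setU [set x] @: [set B : {set W} | B \subset [set~ x] & #|B| == 2].
  apply/setP => R; rewrite !inE; apply/andP/imsetP => [[/eqP cardR xR] | [B B2 ->]].
    exists (R :\ x); last by rewrite setD1K.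
    rewrite inE setDE subsetIr -setDE /=.
    by have := cardsD1 x R; rewrite xR cardR add1n => -[<-].
  rewrite cardsU1 notin_pairs //; move: B2; rewrite inE => /andP[_ /eqP ->].
  by rewrite setU11.
rewrite card_in_imset ?cards_draws ?cardsC1 // => B1 B2 /notin_pairs n1 /notin_pairs n2 eqB.
by rewrite -(setU1K n1) -(setU1K n2) eqB.
Qed.

Lemma card_votes_add x b : #|votes x b| + #|votes x (~~ b)| = #|triples_at x|.
Proof.
rewrite -(cardsID [set R | sigma R x == b] (triples_at x)); congr (_ + _).
  by apply: eq_card => R; rewrite !inE andbC.
by apply: eq_card => R; rewrite !inE andbC; case: (sigma R x); case: b.
Qed.

Lemma card_votes_minority x : #|votes x (~~ majority x)| <= #|votes x (majority x)|.
Proof. by rewrite /majority; case: (leqP #|votes x false| #|votes x true|) => // /ltnW. Qed.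

Lemma card_disagreements_majority_sum :
  #|disagreements majority| <= \sum_x #|votes x (~~ majority x)|.
Proof.
apply: leq_trans (leq_card_bigcup _ _); apply/subset_leq_card/subsetP => R.
rewrite inE => /andP[cardR /forallPn[x]]; rewrite negb_imply => /andP[xR sigma_x].
apply/bigcupP; exists x => //; rewrite !inE cardR xR /=.
by move: sigma_x; case: (sigma R x); case: (majority x).
Qed.

Lemma not_consistent (L R S : {set W}) x :
  R \subset L -> S \subset L -> #|R| = 3 -> #|S| = 3 ->
  x \in R :&: S -> sigma R x != sigma S x -> ~~ consistent sigma L.
Proof.
move=> sRL sSL cardR cardS xRS; apply: contraNN => /forallP/(_ R)/forallP/(_ S).
by rewrite sRL sSL cardR cardS => /forallP/(_ x); rewrite xRS.
Qed.

Lemma card_conflicts_at x : 5 <= #|W| ->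
  #|votes x (~~ majority x)| * #|votes x (majority x)|
    <= \sum_(L in inconsistent_quintuples | x \in L) 100.
Proof.
move=> W5; rewrite -cardsX.
apply: (@leq_trans
  #|\bigcup_(L in inconsistent_quintuples | x \in L) setX (triples_of L) (triples_of L)|).
  apply/subset_leq_card/subsetP => -[R S]; rewrite !inE /=.
  case/andP=> /andP[/andP[/eqP cardR xR] sigmaR] /andP[/andP[/eqP cardS xS] sigmaS].
  have xRS : x \in R :&: S by rewrite inE xR xS.
  have cardRS : #|R :|: S| < 3 + 3.
    by rewrite -{1}cardR -cardS card_setU_meet //; apply/set0Pn; exists x.
  have [L sRSL cardL] := @exists_superset _ (R :|: S) 5 (introT andP (conj cardRS W5)).
  have [sRL sSL] : R \subset L /\ S \subset L by apply/andP; rewrite -subUset.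
  apply/bigcupP; exists L; last by rewrite !inE sRL sSL cardR cardS !eqxx.
  rewrite !inE cardL (subsetP sRL x xR) andbT /=.
  apply: (not_consistent sRL sSL cardR cardS xRS).
  by rewrite (eqP sigmaR) (eqP sigmaS); case: majority.
apply: leq_trans (leq_card_bigcup _ _) _; apply: leq_sum => L /andP[].
by rewrite inE cardsX /triples_of cards_draws => /andP[/eqP ->].
Qed.

Lemma sum_card_conflicts : 5 <= #|W| ->
  \sum_x #|votes x (~~ majority x)| * #|votes x (majority x)|
    <= 500 * #|inconsistent_quintuples|.
Proof.
move=> W5.
apply: (@leq_trans (\sum_x \sum_(L in inconsistent_quintuples | x \in L) 100)).
  by apply: leq_sum => x _; apply: card_conflicts_at.
rewrite (exchange_big_dep (mem inconsistent_quintuples)) => [|x L _ /andP[] //].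
rewrite mulnC -sum_nat_const; apply/eq_leq/eq_bigr => L incL.
have {}incL : L \in inconsistent_quintuples := incL.
have cardL : #|L| = 5 by move: incL; rewrite inE => /andP[/eqP].
by rewrite (eq_bigl [in L]) => [|x]; rewrite ?sum_nat_const ?cardL ?incL.
Qed.

Lemma card_disagreements_majority : 5 <= #|W| ->
  'C(#|W|.-1, 2) * #|disagreements majority| <= 1000 * #|inconsistent_quintuples|.
Proof.
move=> W5; rewrite -[1000]/(2 * 500) -mulnA.
apply: leq_trans (leq_mul (leqnn _) card_disagreements_majority_sum) _.
apply: leq_trans (leq_mul (leqnn _) (sum_card_conflicts W5)).
rewrite !big_distrr; apply: leq_sum => x _.
rewrite -(card_triples_at x) -(card_votes_add x (~~ majority x)) negbK.
exact: mul_add_le_double (card_votes_minority x).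
Qed.

Lemma card_consistent_add_inconsistent :
  #|[set L : {set W} | #|L| == 5 & consistent sigma L]| + #|inconsistent_quintuples|
    = 'C(#|W|, 5).
Proof.
rewrite -card_draws -(cardsID [set L | consistent sigma L] [set L : {set W} | #|L| == 5]).
by congr (_ + _); apply: eq_card => L; rewrite !inE // andbC.
Qed.

End MajorityVote.

Local Open Scope ring_scope.

Theorem lemma6 (F : realFieldType) (eps : F) (heps0 : 0 < eps) (heps1 : eps < 1) :
  exists xi : F, 0 < xi /\
  exists t0 : nat,
  forall (W : finType), (t0 <= #|W|)%N ->
  forall sigma : {set W} -> W -> bool,
    (1 - xi) * ('C(#|W|, 5))%:R
      <= (#|[set L : {set W} | (#|L| == 5)%N & consistent sigma L]|)%:R ->
    exists f : W -> bool,
      (#|[set R : {set W} | (#|R| == 3)%N & ~~ agrees_with sigma f R]|)%:R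
        <= eps * ('C(#|W|, 3))%:R.
Proof.
exists (eps / 100); split; first by rewrite divr_gt0 ?ltr0n.
exists 5%N => W W5 sigma consistent_many; exists (majority sigma).
have inc_le : #|inconsistent_quintuples sigma|%:R <= eps / 100 * 'C(#|W|, 5)%:R :> F.
  by move: consistent_many; rewrite -(card_consistent_add_inconsistent sigma) natrD; lra.
have m_gt0 : (0 < 'C(#|W|.-1, 2))%N by rewrite bin_gt0 -ltnS prednK // (leq_trans _ W5).
rewrite -(@ler_pM2l _ 'C(#|W|.-1, 2)%:R) ?ltr0n //.
have := card_disagreements_majority sigma W5; rewrite -(ler_nat F) !natrM => bad_le.
have := leq_mul_bin5_bin3 #|W|; rewrite -(ler_nat F) !natrM => bin_le.
nra.
Qed.
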